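(* Let $\Gamma=\{f_1,\dots,f_n\}$ be a family of weak weight-functions such that $f_i(x_1,\dots,x_n)\le f_i(x_1+\lambda,\dots,x_n+\lambda)$ for every $i\in\{1,\dots,n\}$, every $\mathbf{x}\in[0,1]^n$ and every $\lambda\in[0,1]$ with $(x_1+\lambda,\dots,x_n+\lambda)\in[0,1]^n$. Then $\mathsf{BGM}_\Gamma$ is a pre-aggregation function which is $(k,\dots,k)$-increasing for every $k>0$.
   Context: A family of weak weight-functions (wFWF) is a family $\Gamma=\{f_i:[0,1]^n\to[0,1]\mid 1\le i\le n\}$ such that (I) $\sum_{i=1}^n f_i(\mathbf{x})\le 1$ for all $\mathbf{x}\in[0,1]^n$ and (II) $\sum_{i=1}^n f_i(1,\dots,1)=1$. The bounded generalized mixture function is $\mathsf{BGM}_\Gamma(\mathbf{x})=\sum_{i=1}^n f_i(\mathbf{x})\,x_i$. For a nonzero $\mathbf{r}\in\mathbb{R}^n$, $F:[0,1]^n\to[0,1]$ is $\mathbf{r}$-increasing if $F(\mathbf{x})\le F(x_1+tr_1,\dots,x_n+tr_n)$ for all $\mathbf{x}\in[0,1]^n$ and $t>0$ with $(x_1+tr_1,\dots,x_n+tr_n)\in[0,1]^n$. $F$ is a pre-aggregation function if $F(0,\dots,0)=0$, $F(1,\dots,1)=1$ and $F$ is $\mathbf{r}$-increasing for some nonzero $\mathbf{r}\in[0,1]^n$. *)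

From mathcomp Require Import all_boot all_order all_algebra.
Set Implicit Arguments. Unset Strict Implicit. Unset Printing Implicit Defensive.
Import Order.TTheory GRing.Theory Num.Theory.
Local Open Scope ring_scope.

Section Defs.
Variables (R : realFieldType) (n : nat).

Definition in_cube (x : 'I_n -> R) : Prop := forall i, 0 <= x i <= 1.

Definition cst_pt (c : R) : 'I_n -> R := fun _ => c.

Definition shift (x : 'I_n -> R) (t : R) (r : 'I_n -> R) : 'I_n -> R :=
  fun i => x i + t * r i.

Definition wFWF (f : 'I_n -> ('I_n -> R) -> R) : Prop :=
  [/\ (forall i x, in_cube x -> 0 <= f i x <= 1),
      (forall x, in_cube x -> \sum_(i < n) f i x <= 1) &
      \sum_(i < n) f i (cst_pt 1) = 1].

Definition BGM (f : 'I_n -> ('I_n -> R) -> R) (x : 'I_n -> R) : R :=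
  \sum_(i < n) f i x * x i.

Definition r_increasing (r : 'I_n -> R) (F : ('I_n -> R) -> R) : Prop :=
  forall x t, in_cube x -> 0 < t -> in_cube (shift x t r) -> F x <= F (shift x t r).

Definition pre_aggregation (F : ('I_n -> R) -> R) : Prop :=
  [/\ (forall x, in_cube x -> 0 <= F x <= 1),
      F (cst_pt 0) = 0,
      F (cst_pt 1) = 1 &
      exists r : 'I_n -> R, (exists i, r i != 0) /\ in_cube r /\ r_increasing r F].

End Defs.

From mathcomp Require Import all_boot all_order all_algebra.
From Stdlib Require Import FunctionalExtensionality.
Set Implicit Arguments.
Unset Strict Implicit.
Unset Printing Implicit Defensive.

Import Order.TTheory GRing.Theory Num.Theory.
Local Open Scope ring_scope.

(* Moving along (k,...,k) by t is moving along the diagonal by t k, which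
   cannot decrease any weight by hypothesis, and increases every coordinate;
   as weights and coordinates are nonnegative, every term f_i(x) x_i of
   BGM grows.  Boundedness holds because BGM is a sub-convex combination of
   points of [0,1], and the boundary conditions come from BGM at a constant
   point c being c times the total weight there. *)

Section BoundedMixture.

Variables (R : realFieldType) (n : nat).
Implicit Types (x : 'I_n -> R) (f : 'I_n -> ('I_n -> R) -> R).

Lemma in_cube_cst_pt (c : R) : 0 <= c <= 1 -> in_cube (cst_pt c : 'I_n -> R).
Proof. by move=> c01 i. Qed.

Lemma shift_cst_pt x (t k : R) :
  shift x t (cst_pt k) = shift x (t * k) (cst_pt 1).
Proof. by apply: functional_extensionality => i; rewrite /shift /cst_pt mulr1. Qed.

Lemma diag_step_le1 (i : 'I_n) x (s : R) :
  in_cube x -> in_cube (shift x s (cst_pt 1)) -> s <= 1.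
Proof.
move=> /(_ i) /andP[xi_ge0 _] /(_ i) /andP[_ +].
by rewrite /shift /cst_pt mulr1; apply: le_trans; rewrite lerDr.
Qed.

Lemma BGM_cst_pt f (c : R) :
  BGM f (cst_pt c) = c * \sum_(i < n) f i (cst_pt c).
Proof. by rewrite /BGM mulr_sumr; apply: eq_bigr => i _; rewrite mulrC. Qed.

Section Weights.

Variable f : 'I_n -> ('I_n -> R) -> R.
Hypothesis f_ge0 : forall i x, in_cube x -> 0 <= f i x.

Lemma BGM_ge0 x : in_cube x -> 0 <= BGM f x.
Proof.
move=> x01; apply: sumr_ge0 => i _.
by rewrite mulr_ge0 ?f_ge0 //; case/andP: (x01 i).
Qed.

Lemma BGM_le_sum_weights x : in_cube x -> BGM f x <= \sum_(i < n) f i x.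
Proof.
move=> x01; apply: ler_sum => i _.
by rewrite ler_piMr ?f_ge0 //; case/andP: (x01 i).
Qed.

Hypothesis f_diag_mono : forall i x (lam : R),
  in_cube x -> 0 <= lam <= 1 -> in_cube (shift x lam (cst_pt 1)) ->
  f i x <= f i (shift x lam (cst_pt 1)).

Lemma BGM_cst_pt_increasing (k : R) : 0 < k -> r_increasing (cst_pt k) (BGM f).
Proof.
move=> k_gt0 x t x01 t_gt0; rewrite shift_cst_pt => xs01.
apply: ler_sum => i _.
have step01 : 0 <= t * k <= 1.
  rewrite mulr_ge0 ?(ltW t_gt0) ?(ltW k_gt0) //=.
  exact: diag_step_le1 i _ _ x01 xs01.
have [xi_ge0 _] := andP (x01 i).
apply: ler_pM; rewrite ?f_ge0 ?f_diag_mono //.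
by rewrite /shift /cst_pt mulr1 lerDl; case/andP: step01.
Qed.

End Weights.

Lemma wFWF_dim_gt0 f : wFWF f -> (0 < n)%N.
Proof.
case=> _ _; case: n f => [|m] f; last by [].
by rewrite big_ord0 => /esym/eqP; rewrite oner_eq0.
Qed.

End BoundedMixture.

Theorem proposition10 (R : realFieldType) (n : nat)
    (f : 'I_n -> ('I_n -> R) -> R) :
  wFWF f ->
  (forall (i : 'I_n) (x : 'I_n -> R) (lam : R),
      in_cube x -> 0 <= lam <= 1 -> in_cube (shift x lam (cst_pt 1)) ->
      f i x <= f i (shift x lam (cst_pt 1))) ->
  pre_aggregation (BGM f) /\
  (forall k : R, 0 < k -> r_increasing (cst_pt k) (BGM f)).
Proof.
move=> wf f_diag_mono; have n_gt0 := wFWF_dim_gt0 wf.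
case: wf => f01 f_sum_le1 f_sum1.
have f_ge0 i x (x01 : in_cube x) : 0 <= f i x by case/andP: (f01 i x x01).
have diag_incr := BGM_cst_pt_increasing f_ge0 f_diag_mono.
split=> //; split.
- move=> x x01; rewrite BGM_ge0 //=.
  exact: le_trans (BGM_le_sum_weights f_ge0 x01) (f_sum_le1 x x01).
- by rewrite BGM_cst_pt mul0r.
- by rewrite BGM_cst_pt f_sum1 mul1r.
- exists (cst_pt 1); split; first by exists (Ordinal n_gt0); rewrite oner_eq0.
  by split; [apply: in_cube_cst_pt; rewrite ler01 lexx | apply: diag_incr; rewrite ltr01].
Qed.
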